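(* Let $X$ be a Hilbert space and let $T:X\rightrightarrows X$ be semilocally monotone on $X$ (i.e., semilocally monotone at every point of $\operatorname{dom}T$), and suppose $\operatorname{dom}T$ is convex. Then $T$ is (globally) monotone on $X$.
   Context: $X$ is a real Hilbert space. For $T:X\rightrightarrows X$, $\operatorname{dom}T=\{u:T(u)\ne\emptyset\}$, $\operatorname{gph}T=\{(u,v):v\in T(u)\}$. $T$ is monotone if $\langle v_1-v_2,u_1-u_2\rangle\ge0$ for all $(u_1,v_1),(u_2,v_2)\in\operatorname{gph}T$. $T$ is semilocally monotone at $\bar u\in\operatorname{dom}T$ if there is a neighborhood $U$ of $\bar u$ in $X$ such that $\langle v_1-v_2,u_1-u_2\rangle\ge0$ for all $(u_1,v_1),(u_2,v_2)\in\operatorname{gph}T\cap(U\times X)$. *)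

From Stdlib Require Import Reals.
Open Scope R_scope.

Record HilbertSpace := {
  hs_car :> Type;
  hs_zero : hs_car;
  hs_add : hs_car -> hs_car -> hs_car;
  hs_opp : hs_car -> hs_car;
  hs_scal : R -> hs_car -> hs_car;
  hs_inner : hs_car -> hs_car -> R;
  hs_addA : forall x y z, hs_add x (hs_add y z) = hs_add (hs_add x y) z;
  hs_addC : forall x y, hs_add x y = hs_add y x;
  hs_add0 : forall x, hs_add x hs_zero = x;
  hs_addN : forall x, hs_add x (hs_opp x) = hs_zero;
  hs_scal1 : forall x, hs_scal 1 x = x;
  hs_scalA : forall a b x, hs_scal a (hs_scal b x) = hs_scal (a * b) x;
  hs_scalDr : forall a x y, hs_scal a (hs_add x y) = hs_add (hs_scal a x) (hs_scal a y);
  hs_scalDl : forall a b x, hs_scal (a + b) x = hs_add (hs_scal a x) (hs_scal b x);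
  hs_innerC : forall x y, hs_inner x y = hs_inner y x;
  hs_innerDl : forall x y z, hs_inner (hs_add x y) z = hs_inner x z + hs_inner y z;
  hs_innerZl : forall a x y, hs_inner (hs_scal a x) y = a * hs_inner x y;
  hs_inner_ge0 : forall x, 0 <= hs_inner x x;
  hs_inner_eq0 : forall x, hs_inner x x = 0 -> x = hs_zero;
  hs_complete : forall u : nat -> hs_car,
    (forall eps, 0 < eps -> exists N, forall m n, (N <= m)%nat -> (N <= n)%nat ->
        sqrt (hs_inner (hs_add (u m) (hs_opp (u n))) (hs_add (u m) (hs_opp (u n)))) < eps) ->
    exists l, forall eps, 0 < eps -> exists N, forall n, (N <= n)%nat ->
        sqrt (hs_inner (hs_add (u n) (hs_opp l)) (hs_add (u n) (hs_opp l))) < eps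
}.

Arguments hs_add {h}.
Arguments hs_opp {h}.
Arguments hs_scal {h}.
Arguments hs_inner {h}.

Definition hs_sub {X : HilbertSpace} (x y : X) : X := hs_add x (hs_opp y).
Definition hs_norm {X : HilbertSpace} (x : X) : R := sqrt (hs_inner x x).

(* A set-valued map T : X ⇉ X is represented by its graph: T u v  <->  v ∈ T(u). *)
Definition setvalued (X : HilbertSpace) := X -> X -> Prop.

Definition dom {X : HilbertSpace} (T : setvalued X) (u : X) : Prop := exists v, T u v.

Definition convex {X : HilbertSpace} (C : X -> Prop) : Prop :=
  forall x y t, C x -> C y -> 0 <= t <= 1 ->
    C (hs_add (hs_scal t x) (hs_scal (1 - t) y)).

Definition neighborhood {X : HilbertSpace} (U : X -> Prop) (ubar : X) : Prop :=
  exists r, 0 < r /\ forall x, hs_norm (hs_sub x ubar) < r -> U x.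

Definition monotone {X : HilbertSpace} (T : setvalued X) : Prop :=
  forall u1 v1 u2 v2, T u1 v1 -> T u2 v2 ->
    0 <= hs_inner (hs_sub v1 v2) (hs_sub u1 u2).

Definition semilocally_monotone_at {X : HilbertSpace} (T : setvalued X) (ubar : X) : Prop :=
  dom T ubar /\
  exists U : X -> Prop, neighborhood U ubar /\
    forall u1 v1 u2 v2, T u1 v1 -> T u2 v2 -> U u1 -> U u2 ->
      0 <= hs_inner (hs_sub v1 v2) (hs_sub u1 u2).

(* Join two points u1, u2 of dom T by the segment t ↦ t u1 + (1 - t) u2, which stays in
   dom T by convexity, and choose v(t) ∈ T(u(t)) with v(0) = v2 and v(1) = v1.  Since
   u(t') - u(t) = (t' - t)(u1 - u2), monotonicity of T near u(s) says exactly that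
   t ↦ <v(t), u1 - u2> is nondecreasing near s.  A function on a compact interval that is
   locally nondecreasing everywhere is nondecreasing (a supremum argument), so
   <v1, u1 - u2> >= <v2, u1 - u2>. *)
From Stdlib Require Import Reals Lra Psatz Classical ClassicalEpsilon.
Open Scope R_scope.

Lemma locally_nondecreasing_le (f : R -> R) (a b : R) :
  a <= b ->
  (forall s, a <= s <= b -> exists d, 0 < d /\
     forall t t', a <= t <= b -> a <= t' <= b ->
       Rabs (t - s) < d -> Rabs (t' - s) < d -> t <= t' -> f t <= f t') ->
  f a <= f b.
Proof.
  intros Hab Hloc.
  set (A := fun s => a <= s <= b /\ forall t, a <= t <= s -> f a <= f t).
  assert (HAa : A a) by (split; [lra | intros t Ht; replace t with a by lra; lra]).
  assert (HAbound : bound A) by (exists b; intros x [Hx _]; lra).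
  destruct (completeness A HAbound (ex_intro _ a HAa)) as [c [Hub Hlub]].
  assert (Hca : a <= c) by (apply Hub; exact HAa).
  assert (Hcb : c <= b) by (apply Hlub; intros x [Hx _]; lra).
  destruct (Hloc c (conj Hca Hcb)) as [d [Hd Hmono]].
  assert (Hnear : exists s, A s /\ c - d < s).
  { apply NNPP; intro Hnone.
    assert (c <= c - d) by
      (apply Hlub; intros x Hx; apply Rnot_lt_le; intro; apply Hnone; now exists x).
    lra. }
  destruct Hnear as [s [[Hs HAs] Hsc]].
  assert (Hsc' : s <= c) by (apply Hub; split; assumption).
  set (c' := Rmin (c + d / 2) b).
  assert (Hc' : c' <= c + d / 2 /\ c' <= b) by (split; [apply Rmin_l | apply Rmin_r]).
  (* Past s, the window of length d around c carries the inequality f a <= f s further. *)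
  assert (HAc' : A c').
  { assert (a <= c') by (apply Rmin_glb; lra).
    split; [lra |]. intros t Ht.
    destruct (Rle_dec t s) as [Hts | Hts]; [apply HAs; lra |].
    apply Rle_trans with (f s); [apply HAs; lra |].
    apply Hmono; try lra; apply Rabs_def1; lra. }
  assert (Hc'b : c' = b).
  { assert (c' <= c) by (apply Hub; exact HAc').
    unfold c' in *. destruct (Rle_dec (c + d / 2) b).
    - rewrite Rmin_left in *; lra.
    - rewrite Rmin_right; lra. }
  destruct HAc' as [_ HAc']. apply HAc'. lra.
Qed.

Section HilbertSpaceAlgebra.
Variable X : HilbertSpace.

Lemma hs_add0l (x : X) : hs_add (hs_zero X) x = x.
Proof. rewrite hs_addC; apply hs_add0. Qed.

Lemma hs_scal0 (x : X) : hs_scal 0 x = hs_zero X.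
Proof.
  set (y := hs_scal 0 x).
  assert (Hy : y = hs_add y y) by (unfold y; rewrite <- hs_scalDl; f_equal; ring).
  rewrite <- (hs_addN X y). rewrite Hy at 2.
  rewrite <- hs_addA, hs_addN, hs_add0. reflexivity.
Qed.

Lemma hs_inner0l (y : X) : hs_inner (hs_zero X) y = 0.
Proof. rewrite <- (hs_scal0 (hs_zero X)), hs_innerZl; ring. Qed.

Lemma hs_innerNl (x y : X) : hs_inner (hs_opp x) y = - hs_inner x y.
Proof.
  assert (H := hs_inner0l y). rewrite <- (hs_addN X x), hs_innerDl in H. lra.
Qed.

Lemma hs_innerBl (x y z : X) : hs_inner (hs_sub x y) z = hs_inner x z - hs_inner y z.
Proof. unfold hs_sub. rewrite hs_innerDl, hs_innerNl. ring. Qed.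

Lemma hs_innerDr (x y z : X) : hs_inner x (hs_add y z) = hs_inner x y + hs_inner x z.
Proof. rewrite hs_innerC, hs_innerDl, (hs_innerC _ y), (hs_innerC _ z); ring. Qed.

Lemma hs_innerZr (a : R) (x y : X) : hs_inner x (hs_scal a y) = a * hs_inner x y.
Proof. rewrite hs_innerC, hs_innerZl, hs_innerC; ring. Qed.

Lemma hs_innerBr (x y z : X) : hs_inner x (hs_sub y z) = hs_inner x y - hs_inner x z.
Proof. rewrite hs_innerC, hs_innerBl, (hs_innerC _ y), (hs_innerC _ z); ring. Qed.

End HilbertSpaceAlgebra.

Section Segment.
Variables (X : HilbertSpace) (u1 u2 : X).

Definition segment (t : R) : X := hs_add (hs_scal t u1) (hs_scal (1 - t) u2).

Lemma segment0 : segment 0 = u2.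
Proof.
  unfold segment. rewrite hs_scal0, hs_add0l. replace (1 - 0) with 1 by ring.
  apply hs_scal1.
Qed.

Lemma segment1 : segment 1 = u1.
Proof.
  unfold segment. replace (1 - 1) with 0 by ring. rewrite hs_scal0, hs_add0.
  apply hs_scal1.
Qed.

Lemma hs_inner_segment_sub (a : X) (t s : R) :
  hs_inner a (hs_sub (segment t) (segment s)) = (t - s) * hs_inner a (hs_sub u1 u2).
Proof. unfold segment. rewrite !hs_innerBr, !hs_innerDr, !hs_innerZr. ring. Qed.

Lemma hs_norm_segment_sub (t s : R) :
  hs_norm (hs_sub (segment t) (segment s)) = Rabs (t - s) * hs_norm (hs_sub u1 u2).
Proof.
  unfold hs_norm.
  rewrite hs_inner_segment_sub, hs_innerC, hs_inner_segment_sub, <- Rmult_assoc.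
  rewrite sqrt_mult_alt by apply Rle_0_sqr.
  now rewrite <- sqrt_Rsqr_abs.
Qed.

Lemma segment_near (s r : R) : 0 < r ->
  exists d, 0 < d /\ forall t, Rabs (t - s) < d ->
    hs_norm (hs_sub (segment t) (segment s)) < r.
Proof.
  intros Hr. set (N := hs_norm (hs_sub u1 u2)).
  assert (HN : 0 <= N) by apply sqrt_pos.
  exists (r / (N + 1)). split; [apply Rdiv_lt_0_compat; lra |].
  intros t Ht. rewrite hs_norm_segment_sub. fold N.
  apply Rmult_lt_compat_r with (r := N + 1) in Ht; [| lra].
  unfold Rdiv in Ht. rewrite Rmult_assoc, Rinv_l, Rmult_1_r in Ht by lra.
  assert (Habs := Rabs_pos (t - s)). nra.
Qed.

End Segment.

Arguments segment {X}.

Section MonotoneAlongSegment.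
Variables (X : HilbertSpace) (T : setvalued X) (u1 v1 u2 v2 : X).

Lemma segment_selection :
  convex (dom T) -> T u1 v1 -> T u2 v2 ->
  exists w : R -> X, (forall t, 0 <= t <= 1 -> T (segment u1 u2 t) (w t)) /\
    w 0 = v2 /\ w 1 = v1.
Proof.
  intros Hconv H1 H2.
  assert (Hpoint : forall t, exists w,
    (0 <= t <= 1 -> T (segment u1 u2 t) w) /\ (t = 0 -> w = v2) /\ (t = 1 -> w = v1)).
  { intro t. destruct (Req_dec t 0) as [-> | Ht0].
    { exists v2. rewrite segment0. repeat split; auto; lra. }
    destruct (Req_dec t 1) as [-> | Ht1].
    { exists v1. rewrite segment1. repeat split; auto; lra. }
    destruct (classic (0 <= t <= 1)) as [Ht | Ht].
    - destruct (Hconv u1 u2 t (ex_intro _ v1 H1) (ex_intro _ v2 H2) Ht) as [w Hw].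
      exists w. repeat split; auto; lra.
    - exists v1. repeat split; intros; tauto || lra. }
  destruct (choice _ Hpoint) as [w Hw].
  exists w. repeat split; apply Hw; auto.
Qed.

Lemma semilocally_monotone_along_segment (w : R -> X) (s : R) :
  (forall t, 0 <= t <= 1 -> T (segment u1 u2 t) (w t)) ->
  semilocally_monotone_at T (segment u1 u2 s) ->
  exists d, 0 < d /\ forall t t', 0 <= t <= 1 -> 0 <= t' <= 1 ->
    Rabs (t - s) < d -> Rabs (t' - s) < d -> t <= t' ->
    hs_inner (w t) (hs_sub u1 u2) <= hs_inner (w t') (hs_sub u1 u2).
Proof.
  intros Hw [_ [U [[r [Hr HU]] HmonoU]]].
  destruct (segment_near _ u1 u2 s r Hr) as [d [Hd Hnear]].
  exists d. split; [exact Hd |].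
  intros t t' Ht Ht' Hts Hts' Htt'.
  destruct (Req_dec t t') as [<- | Hneq]; [lra |].
  assert (Hmono := HmonoU _ _ _ _ (Hw t' Ht') (Hw t Ht)
                    (HU _ (Hnear t' Hts')) (HU _ (Hnear t Hts))).
  rewrite hs_inner_segment_sub, hs_innerBl in Hmono.
  nra.
Qed.

End MonotoneAlongSegment.

Theorem lemma3p4 (X : HilbertSpace) (T : setvalued X)
  (Hsl : forall ubar : X, dom T ubar -> semilocally_monotone_at T ubar)
  (Hconv : convex (dom T)) :
  monotone T.
Proof.
  intros u1 v1 u2 v2 H1 H2.
  destruct (segment_selection X T u1 v1 u2 v2 Hconv H1 H2) as [w [Hw [Hw0 Hw1]]].
  assert (Hle : hs_inner (w 0) (hs_sub u1 u2) <= hs_inner (w 1) (hs_sub u1 u2)).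
  { apply (locally_nondecreasing_le (fun t => hs_inner (w t) (hs_sub u1 u2))); [lra |].
    intros s Hs.
    apply (semilocally_monotone_along_segment X T); [exact Hw |].
    apply Hsl. exists (w s). now apply Hw. }
  rewrite Hw0, Hw1 in Hle.
  rewrite hs_innerBl. lra.
Qed.
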